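(* For $0<\rho<1$ and integers $k\ge2$ define $$\begin{aligned}a_k(\rho) ={}& \frac{4\sqrt{1+\rho^2}}{9} \binom{\frac{3}{2}}{k+1} (-1)^{k+1} \Big(\frac{2\rho^2}{3(1+\rho^2)}\Big)^{k}+\frac{\sqrt{1+\rho^2}}{3} \binom{\frac{1}{2}}{2k}\Big(\frac{2\rho}{1+\rho^2}\Big)^{2k} -\frac{28}{15\sqrt{1+\rho^2}}\binom{\frac{1}{2}}{2k+2}\Big(\frac{2\rho}{1+\rho^2}\Big)^{2k}\\&+\frac{10\rho^2+1}{15\sqrt{1+\rho^2}}\binom{\frac{1}{2}}{2k+1}\Big(\frac{2\rho}{1+\rho^2}\Big)^{2k} -\frac{\rho\sqrt{1+\rho^2}}{6}\binom{\frac{1}{2}}{2k-1}\Big(\frac{2\rho}{1+\rho^2}\Big)^{2k-1}-\frac{8}{5\sqrt{1+\rho^2}}\binom{\frac{1}{2}}{2k+3}\Big(\frac{2\rho}{1+\rho^2}\Big)^{2k}.\end{aligned}$$ Then $a_k(\rho)<0$ for all integers $k\ge2$ and all $0<\rho<1$.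
   Context: For real $a$ and integer $m\ge0$, $\binom{a}{m}=\frac{a(a-1)\cdots(a-m+1)}{m!}$ is the generalized binomial coefficient. *)

From Stdlib Require Import Reals Arith.
Open Scope R_scope.

Fixpoint falling (a : R) (m : nat) : R :=
  match m with
  | O => 1
  | S m' => falling a m' * (a - INR m')
  end.

Definition gbinom (a : R) (m : nat) : R := falling a m / INR (fact m).

Definition a_coef (rho : R) (k : nat) : R :=
  let s := sqrt (1 + rho ^ 2) in
  let t := 2 * rho / (1 + rho ^ 2) in
  4 * s / 9 * gbinom (3 / 2) (k + 1) * (-1) ^ (k + 1)
      * (2 * rho ^ 2 / (3 * (1 + rho ^ 2))) ^ k
  + s / 3 * gbinom (1 / 2) (2 * k) * t ^ (2 * k)
  - 28 / (15 * s) * gbinom (1 / 2) (2 * k + 2) * t ^ (2 * k)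
  + (10 * rho ^ 2 + 1) / (15 * s) * gbinom (1 / 2) (2 * k + 1) * t ^ (2 * k)
  - rho * s / 6 * gbinom (1 / 2) (2 * k - 1) * t ^ (2 * k - 1)
  - 8 / (5 * s) * gbinom (1 / 2) (2 * k + 3) * t ^ (2 * k).

(* Put u = 1 + rho^2 and t = 2 rho / u.  Pulling out the positive factor
   t^(2k) / sqrt u and expressing every binom(1/2, 2k-1+j) through
   binom(1/2, 2k-1) by the recurrence of generalized binomials, a_k becomes
   binom(3/2, k+1) (-1)^(k+1) (u/6)^k 4u/9 plus binom(1/2, 2k-1) times a
   quadratic in u with coefficients rational in k.  For k >= 3, comparing
   ratios of consecutive terms gives
   binom(3/2, k+1) (-1)^(k+1) 3^-k <= binom(1/2, 2k-1) / (3 k^2), and the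
   maximum of the quadratic over u is below -8 / (27 k^2), because the
   numerator of the resulting rational function of k is negative for
   k >= 3.  The case k = 2 is checked directly. *)

From Stdlib Require Import Reals Lra Lia Psatz.
Open Scope R_scope.

Lemma gbinom_0 a : gbinom a 0 = 1.
Proof. unfold gbinom; simpl; field. Qed.

Lemma gbinom_S a m : gbinom a (S m) = gbinom a m * (a - INR m) / INR (S m).
Proof.
  unfold gbinom; cbn [falling]; rewrite fact_simpl, mult_INR.
  field; split; [apply INR_fact_neq_0 | apply not_0_INR; lia].
Qed.

Definition signed_binom_3_2 (k : nat) : R := gbinom (3/2) (k + 1) * (-1) ^ (k + 1).

Definition binom_1_2_odd (k : nat) : R := gbinom (1/2) (2 * k - 1).

(* For [K = INR k], [binom_ratio<j> K] is the absolute value of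
   [gbinom (1/2) (2k-1+j) / gbinom (1/2) (2k-1)]. *)
Definition binom_ratio2 (K : R) : R := (4*K - 3) * (4*K - 1) / (4*K * (4*K + 2)).
Definition binom_ratio3 (K : R) : R := binom_ratio2 K * (4*K + 1) / (4*K + 4).
Definition binom_ratio4 (K : R) : R := binom_ratio3 K * (4*K + 3) / (4*K + 6).

Definition half_binom_part (K u : R) : R :=
  - u / 3 * ((4*K - 3) / (4*K)) + 28 / 15 * binom_ratio3 K
  + (10*u - 9) / 15 * binom_ratio2 K - u ^ 2 / 12 - 8 / 5 * binom_ratio4 K.

Lemma a_coef_factor rho k u : (1 <= k)%nat -> 0 < rho -> u = 1 + rho ^ 2 ->
  a_coef rho k = (2 * rho / u) ^ (2 * k) / sqrt u *
    (4 * u / 9 * signed_binom_3_2 k * (u / 6) ^ k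
     + binom_1_2_odd k * half_binom_part (INR k) u).
Proof.
  intros hk hrho hu.
  assert (hs : sqrt u * sqrt u = u) by (apply sqrt_sqrt; nra).
  assert (hs0 : 0 < sqrt u) by (apply sqrt_lt_R0; nra).
  unfold a_coef; cbv zeta; rewrite <- hu.
  set (t := 2 * rho / u).
  assert (Podd : t ^ (2 * k - 1) = t ^ (2 * k) * (u / (2 * rho))).
  { replace (2 * k)%nat with (S (2 * k - 1)) at 2 by lia; simpl pow.
    unfold t; field; nra. }
  assert (Pfirst : (2 * rho ^ 2 / (3 * u)) ^ k = (u / 6) ^ k * t ^ (2 * k)).
  { rewrite pow_mult, <- Rpow_mult_distr; f_equal; unfold t; field; nra. }
  rewrite Podd, Pfirst.
  set (m := (2 * k - 1)%nat).
  assert (Hm : INR m = 2 * INR k - 1)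
    by (unfold m; rewrite minus_INR, mult_INR by lia; simpl INR; ring).
  replace (2 * k + 3)%nat with (S (S (S (S m)))) by (unfold m; lia).
  replace (2 * k + 2)%nat with (S (S (S m))) by (unfold m; lia).
  replace (2 * k + 1)%nat with (S (S m)) by (unfold m; lia).
  replace (2 * k)%nat with (S m) by (unfold m; lia).
  unfold signed_binom_3_2, binom_1_2_odd, half_binom_part,
    binom_ratio4, binom_ratio3, binom_ratio2; fold m.
  rewrite !gbinom_S, !S_INR, Hm.
  assert (1 <= INR k) by (apply (le_INR 1); exact hk).
  assert (hrho2 : rho ^ 2 = sqrt u * sqrt u - 1) by lra.
  rewrite hrho2; set (s := sqrt u) in *; clearbody s t; clear hu; subst u.
  set (w := t ^ S m); set (v := (s * s / 6) ^ k); set (y := (-1) ^ (k + 1)).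
  field; repeat split; nra.
Qed.

Lemma signed_binom_3_2_S k :
  signed_binom_3_2 (S k) = signed_binom_3_2 k * (INR k - 1/2) / (INR k + 2).
Proof.
  unfold signed_binom_3_2; replace (S k + 1)%nat with (S (k + 1)) by lia.
  rewrite gbinom_S, !S_INR, plus_INR; simpl pow; simpl INR.
  field; pose proof (pos_INR k); lra.
Qed.

Lemma signed_binom_3_2_pos k : (2 <= k)%nat -> 0 < signed_binom_3_2 k.
Proof.
  induction 1 as [|k hk IH].
  - unfold signed_binom_3_2; simpl plus; rewrite !gbinom_S, gbinom_0; simpl; lra.
  - rewrite signed_binom_3_2_S.
    apply le_INR in hk; simpl INR in hk.
    apply Rdiv_lt_0_compat; nra.
Qed.

Lemma binom_ratio2_pos K : 1 <= K -> 0 < binom_ratio2 K.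
Proof. intro hK; unfold binom_ratio2; apply Rdiv_lt_0_compat; nra. Qed.

Lemma binom_1_2_odd_S k : (1 <= k)%nat ->
  binom_1_2_odd (S k) = binom_1_2_odd k * binom_ratio2 (INR k).
Proof.
  intro hk; unfold binom_1_2_odd, binom_ratio2.
  replace (2 * S k - 1)%nat with (S (S (2 * k - 1))) by lia.
  rewrite !gbinom_S, !S_INR, minus_INR, mult_INR by lia; simpl INR.
  apply le_INR in hk; simpl INR in hk.
  field; lra.
Qed.

Lemma binom_1_2_odd_pos k : (1 <= k)%nat -> 0 < binom_1_2_odd k.
Proof.
  induction 1 as [|k hk IH].
  - unfold binom_1_2_odd; simpl; rewrite gbinom_S, gbinom_0; simpl; lra.
  - rewrite binom_1_2_odd_S by exact hk.
    apply Rmult_lt_0_compat; [exact IH|].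
    apply binom_ratio2_pos, (le_INR 1); exact hk.
Qed.

Lemma signed_binom_growth_le K : 3 <= K ->
  (K - 1/2) / (K + 2) * (1/3) * (K + 1) ^ 2 <= binom_ratio2 K * K ^ 2.
Proof.
  intro hK; unfold binom_ratio2.
  apply Rmult_le_reg_r with (3 * (K + 2) * (4*K * (4*K + 2))); [nra|].
  field_simplify; [|lra|lra].
  assert (0 <= K ^ 3 * (K * K - 9)) by (apply Rmult_le_pos; [apply pow_le|]; nra).
  assert (0 <= K ^ 4) by (apply pow_le; lra).
  assert (0 <= K ^ 2) by (apply pow_le; lra).
  nra.
Qed.

Lemma signed_binom_3_2_le_binom_1_2_odd k : (3 <= k)%nat ->
  signed_binom_3_2 k * (1/3) ^ k * (3 * INR k ^ 2) <= binom_1_2_odd k.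
Proof.
  induction 1 as [|k hk IH].
  - unfold signed_binom_3_2, binom_1_2_odd; simpl plus; simpl minus.
    rewrite !gbinom_S, !gbinom_0; simpl; lra.
  - rewrite signed_binom_3_2_S, binom_1_2_odd_S, S_INR by lia.
    assert (hK : 3 <= INR k) by (pose proof (le_INR 3 k hk); simpl INR in *; lra).
    pose proof (signed_binom_growth_le _ hK) as hratio.
    pose proof (signed_binom_3_2_pos k ltac:(lia)) as hX.
    pose proof (binom_1_2_odd_pos k ltac:(lia)) as hG.
    set (K := INR k) in *; set (X := signed_binom_3_2 k) in *;
      set (G := binom_1_2_odd k) in *.
    assert (hp : 0 < (1/3) ^ k) by (apply pow_lt; lra).
    set (p := (1/3) ^ k) in *; simpl pow; fold p.
    set (c := (K - 1/2) / (K + 2) * (1/3) * (K + 1) ^ 2) in *.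
    assert (hc : 0 <= c) by (unfold c; apply Rmult_le_pos; [apply Rmult_le_pos|];
      [apply Rlt_le, Rdiv_lt_0_compat| |apply pow_le]; lra).
    assert (E : X * (K - 1/2) / (K + 2) * (1/3 * p) * (3 * ((K + 1) * ((K + 1) * 1)))
                = (X * p * (3 * K ^ 2)) * c / K ^ 2) by (unfold c; field; lra).
    rewrite E.
    apply Rmult_le_reg_r with (K ^ 2); [nra|].
    unfold Rdiv; rewrite Rmult_assoc, Rinv_l, Rmult_1_r by nra.
    apply Rle_trans with (G * c); [apply Rmult_le_compat_r; lra|].
    rewrite Rmult_assoc; apply Rmult_le_compat_l; lra.
Qed.

Lemma half_binom_part_lt K u : 3 <= K -> half_binom_part K u < - (8 / (27 * K ^ 2)).
Proof.
  intro hK.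
  set (b := (4*K - 3) * (K - 1) / (3 * K * (4*K + 2))).
  set (c := 28/15 * binom_ratio3 K - 3/5 * binom_ratio2 K - 8/5 * binom_ratio4 K).
  assert (vertex : half_binom_part K u <= 3 * b ^ 2 + c).
  { assert (E : half_binom_part K u = - (u - 6 * b) ^ 2 / 12 + 3 * b ^ 2 + c)
      by (unfold half_binom_part, b, c, binom_ratio4, binom_ratio3, binom_ratio2; field; lra).
    rewrite E; pose proof (pow2_ge_0 (u - 6 * b)); lra. }
  set (N := 10848*K - 7216*K^2 + 47344*K^3 + 65824*K^4 - 29824*K^5).
  set (D := 4*K * (4*K + 2)^2 * (4*K + 4) * (4*K + 6) * 27 * K^2).
  assert (E : 8 / (27 * K ^ 2) + 3 * b ^ 2 + c = N / D)
    by (unfold b, c, N, D, binom_ratio4, binom_ratio3, binom_ratio2; field; lra).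
  assert (hD : 0 < D) by (unfold D; repeat apply Rmult_lt_0_compat; nra).
  (* expand N around K = 3: all coefficients are negative *)
  assert (hN : N < 0).
  { unfold N; set (j := K - 3); replace K with (j + 3) by (unfold j; ring).
    assert (0 <= j) by (unfold j; lra).
    assert (0 <= j ^ 2) by (apply pow_le; lra).
    assert (0 <= j ^ 3) by (apply pow_le; lra).
    assert (0 <= j ^ 4) by (apply pow_le; lra).
    assert (0 <= j ^ 5) by (apply pow_le; lra).
    ring_simplify; lra. }
  assert (N / D < 0) by (apply Rdiv_neg_pos; lra).
  lra.
Qed.

Lemma a_coef_bracket_neg k u : (2 <= k)%nat -> 1 < u < 2 ->
  4 * u / 9 * signed_binom_3_2 k * (u / 6) ^ k
  + binom_1_2_odd k * half_binom_part (INR k) u < 0.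
Proof.
  intros hk hu.
  destruct (Nat.eq_dec k 2) as [-> | hk2].
  - unfold signed_binom_3_2, binom_1_2_odd, half_binom_part,
      binom_ratio4, binom_ratio3, binom_ratio2; simpl plus; simpl minus.
    rewrite !gbinom_S, !gbinom_0; simpl INR; simpl pow.
    assert (u ^ 3 <= 2 * u ^ 2) by nra.
    nra.
  - assert (hk3 : (3 <= k)%nat) by lia.
    assert (hK : 3 <= INR k) by (pose proof (le_INR 3 k hk3); simpl INR in *; lra).
    pose proof (signed_binom_3_2_pos k hk) as hX.
    pose proof (binom_1_2_odd_pos k ltac:(lia)) as hG.
    pose proof (signed_binom_3_2_le_binom_1_2_odd k hk3) as hXG.
    pose proof (half_binom_part_lt (INR k) u hK) as hpart.
    assert (hv : (u / 6) ^ k <= (1/3) ^ k) by (apply pow_incr; lra).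
    assert (hv0 : 0 <= (u / 6) ^ k) by (apply pow_le; lra).
    set (K := INR k) in *; set (X := signed_binom_3_2 k) in *;
      set (G := binom_1_2_odd k) in *; set (p := (1/3) ^ k) in *.
    assert (hXp : X * p <= G / (3 * K ^ 2)).
    { apply Rmult_le_reg_r with (3 * K ^ 2); [nra|].
      replace (G / (3 * K ^ 2) * (3 * K ^ 2)) with G by (field; nra); lra. }
    assert (first_term : 4 * u / 9 * X * (u / 6) ^ k <= G * (8 / (27 * K ^ 2))).
    { apply Rle_trans with (4 * u / 9 * (X * p)).
      - rewrite Rmult_assoc; apply Rmult_le_compat_l, Rmult_le_compat_l; lra.
      - replace (G * (8 / (27 * K ^ 2))) with (8 / 9 * (G / (3 * K ^ 2))) by (field; nra).
        assert (0 <= X * p) by (apply Rmult_le_pos; [lra | unfold p; apply pow_le; lra]).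
        nra. }
    nra.
Qed.

Theorem lemma6 : forall (k : nat) (rho : R),
  (2 <= k)%nat -> 0 < rho < 1 -> a_coef rho k < 0.
Proof.
  intros k rho hk [hrho0 hrho1].
  assert (hu : 1 < 1 + rho ^ 2 < 2) by nra.
  rewrite (a_coef_factor rho k (1 + rho ^ 2)) by (lia || lra).
  apply Rmult_pos_neg; [|exact (a_coef_bracket_neg k _ hk hu)].
  apply Rdiv_lt_0_compat; [apply pow_lt, Rdiv_lt_0_compat | apply sqrt_lt_R0]; lra.
Qed.
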